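(* For all $m$, $n\le m$ and $0<\rho<n$, $$K_{\mathrm R}(q^m,n,\rho)\le\frac{q^{mn}}{V_\rho(q^m,n)}\left[1+\ln\big(V_\rho(q^m,n)\big)\right].$$
   Context: The rank $\mathrm{rk}(\mathbf x)$ of $\mathbf x\in\mathrm{GF}(q^m)^n$ is the maximum number of its coordinates linearly independent over $\mathrm{GF}(q)$, and $d_{\mathrm R}(\mathbf x,\mathbf y)=\mathrm{rk}(\mathbf x-\mathbf y)$. $K_{\mathrm R}(q^m,n,\rho)$ is the minimum cardinality of a code in $\mathrm{GF}(q^m)^n$ with rank covering radius $\rho$ (covering radius $=\max_{\mathbf x}\min_{\mathbf c\in C}d_{\mathrm R}(\mathbf x,\mathbf c)$). $V_\rho(q^m,n)=\sum_{u=0}^\rho{n\brack u}\alpha(m,u)$ with $\alpha(m,0)=1$, $\alpha(m,u)=\prod_{i=0}^{u-1}(q^m-q^i)$, ${n\brack u}=\alpha(n,u)/\alpha(u,u)$. *)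

From HB Require Import structures.
From mathcomp Require Import all_boot all_order all_algebra all_field.
From mathcomp Require Import reals exp.
Set Implicit Arguments. Unset Strict Implicit. Unset Printing Implicit Defensive.
Import Order.TTheory GRing.Theory Num.Theory.

(* GF(q) is the finite field F; GF(q^m) is a field extension L of F with
   \dim {:L} = m (so #|L| = q^m).  [finvect_type L] is L with its canonical
   finType structure, so that codes can be finite sets. *)
Section RankMetric.
Variables (F : finFieldType) (L : fieldExtType F).
Local Notation LL := (finvect_type L).

(* rank of x in GF(q^m)^n: max number of coordinates linearly independent
   over GF(q) = dimension over F of the F-span of the coordinates. *)
Definition rk (n : nat) (x : 'rV[LL]_n) : nat :=
  \dim (<<[seq x ord0 i | i <- enum 'I_n]>>%VS : {vspace LL}).

Definition dR (n : nat) (x y : 'rV[LL]_n) : nat := rk (x - y).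

Definition rank_covers (n rho : nat) (C : {set 'rV[LL]_n}) : bool :=
  [forall x : 'rV[LL]_n, [exists c in C, dR x c <= rho]].

Definition K_R (n rho : nat) : nat :=
  \big[minn/#|[set: 'rV[LL]_n]|]_(C : {set 'rV[LL]_n} | rank_covers rho C) #|C|.
End RankMetric.

Definition alpha (q m u : nat) : nat := \prod_(i < u) (q ^ m - q ^ i).
Definition gbin (q n u : nat) : nat := alpha q n u %/ alpha q u u.
Definition Vol (q m n rho : nat) : nat :=
  \sum_(u < rho.+1) gbin q n u * alpha q m u.

(* The rank-metric ball of radius rho has V_rho(q^m, n) points whatever its
   centre: it is a translate of the set of vectors of rank at most rho, and the
   number of n-tuples of GF(q^m) spanning a GF(q)-space of dimension u obeys the
   q-Pascal recursion, giving [n brack u] alpha(m, u).  In a family of balls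
   where every ball has B points and every point lies in B balls, the greedy
   code (Johnson, Lovasz, Stein) always adds the ball covering most uncovered
   points; the potential sum_c H(|ball c :&: U|), H the harmonic numbers and U
   the uncovered set, then drops by at least B per step, so the code C has
   |C| B <= |T| H(B) <= |T| (1 + ln B). *)

From HB Require Import structures.
From mathcomp Require Import all_boot all_order all_algebra all_field.
From mathcomp Require Import reals exp sequences.
From mathcomp Require Import ring lra zify.
Import Order.TTheory GRing.Theory Num.Theory.
Set Implicit Arguments. Unset Strict Implicit. Unset Printing Implicit Defensive.

Fixpoint qbinom (q n u : nat) : nat :=
  match n, u with
  | _, 0 => 1
  | 0, _.+1 => 0
  | n.+1, u.+1 => q ^ u.+1 * qbinom q n u.+1 + qbinom q n u
  end.

Lemma qbinomn0 q n : qbinom q n 0 = 1.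
Proof. by case: n. Qed.

Section GaussianBinomial.
Variable q : nat.
Hypothesis q_gt1 : 1 < q.

Lemma alpha0 n : alpha q n 0 = 1.
Proof. by rewrite /alpha big_ord0. Qed.

Lemma alphaSr n u : alpha q n u.+1 = alpha q n u * (q ^ n - q ^ u).
Proof. by rewrite /alpha big_ord_recr. Qed.

Lemma alphaS n u : alpha q n.+1 u.+1 = (q ^ n.+1 - 1) * q ^ u * alpha q n u.
Proof.
rewrite /alpha big_ord_recl /= expn0 -mulnA; congr (_ * _).
under eq_bigr do rewrite /bump /= add1n !expnS -mulnBr.
by rewrite big_split /= prod_nat_const card_ord.
Qed.

Lemma alpha_eq0 n u : n < u -> alpha q n u = 0.
Proof. by move=> ltnu; rewrite /alpha (bigD1 (Ordinal ltnu)) //= subnn. Qed.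

Lemma alpha_gt0 n u : u <= n -> 0 < alpha q n u.
Proof.
move=> leun; rewrite /alpha prodn_gt0 // => i.
by rewrite subn_gt0 ltn_exp2l // (leq_trans (ltn_ord i)).
Qed.

Lemma qbinom_alpha n u : qbinom q n u * alpha q u u = alpha q n u.
Proof.
elim: n u => [|n IHn] [|v] /=; rewrite ?alpha0 //.
  by rewrite mul0n alpha_eq0.
rewrite mulnDl -mulnA !IHn [in LHS]alphaS mulnCA IHn alphaS alphaSr.
have [lenv | ltvn] := leqP v n; last by rewrite alpha_eq0 ?muln0.
have qpos : 0 < q by lia.
have split_qn1 : q * (q ^ n - q ^ v) + (q ^ v.+1 - 1) = q ^ n.+1 - 1.
  rewrite mulnBr -!expnS addnBA ?expn_gt0 ?qpos // subnK //.
  by rewrite leq_exp2l.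
rewrite -split_qn1 expnS; ring.
Qed.

Lemma gbinE n u : gbin q n u = qbinom q n u.
Proof. by rewrite /gbin -qbinom_alpha mulnK // alpha_gt0. Qed.
End GaussianBinomial.

Section SpanDimension.
Variables (F : finFieldType) (L : fieldExtType F).
Local Notation LL := (finvect_type L).
Local Notation q := #|F|.
Local Notation m := (\dim {:L}).

Lemma card_finvect : #|LL| = q ^ m.
Proof. by rewrite -(card_vspacef (Vector.class LL)) card_vspace. Qed.

Lemma dim_span_cons (x : LL) (t : seq LL) :
  \dim <<x :: t>> = \dim <<t>> + (x \notin <<t>>%VS).
Proof.
rewrite span_cons; have [xt | xNt] := boolP (x \in <<t>>%VS).
  by move/addv_idPr: xt => ->; rewrite addn0.
have x_neq0 : x != 0%R by apply: contraNneq xNt => ->; rewrite mem0v.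
rewrite dimv_disjoint_sum ?dim_vline ?x_neq0 1?addnC //.
apply/eqP; rewrite -subv0; apply/subvP => _ /memv_capP[/vlineP[k ->] kxt].
rewrite memv0 scaler_eq0; apply/orP; left; apply: contraNT xNt => k_neq0.
by rewrite -(scalerK k_neq0 x) memvZ.
Qed.

Lemma sum_span_dim_cons (t : seq LL) u :
  \sum_(x : LL) (\dim <<x :: t>> == u) =
  (\dim <<t>> == u) * q ^ \dim <<t>> +
  ((\dim <<t>>).+1 == u) * (q ^ m - q ^ \dim <<t>>).
Proof.
under eq_bigr do rewrite dim_span_cons.
rewrite (bigID (mem <<t>>%VS)) /=.
under eq_bigr => x -> do rewrite addn0.
under [X in _ + X = _]eq_bigr => x /negbTE-> do rewrite addn1.
rewrite !sum_nat_const mulnC [X in _ + X = _]mulnC -(card_vspace <<t>>%VS).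
congr (_ * _ + _ * _).
rewrite -card_finvect -(cardC (mem <<t>>%VS)) addKn.
by apply: eq_card => x; rewrite !inE.
Qed.

Definition span_dim_count n u : nat := \sum_(t : n.-tuple LL) (\dim <<tval t>> == u).

Lemma span_dim_countS n u : span_dim_count n.+1 u = \sum_(t : n.-tuple LL)
  ((\dim <<tval t>> == u) * q ^ \dim <<tval t>> +
   ((\dim <<tval t>>).+1 == u) * (q ^ m - q ^ \dim <<tval t>>)).
Proof.
rewrite /span_dim_count.
rewrite (reindex (fun p : LL * n.-tuple LL => [tuple of p.1 :: p.2])) /=; last first.
  exists (fun t : n.+1.-tuple LL => (thead t, [tuple of behead t])).
    by move=> [x t] _ /=; congr (_, _); apply: val_inj.
  by move=> t _; apply: val_inj; rewrite /= [in RHS](tuple_eta t).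
rewrite -(pair_big predT predT
  (fun (x : LL) (t : n.-tuple LL) => (\dim <<x :: tval t>> == u) : nat)) /=.
by rewrite exchange_big; apply: eq_bigr => t _; apply: sum_span_dim_cons.
Qed.

Lemma span_dim_count0 u : span_dim_count 0 u = (u == 0).
Proof.
rewrite /span_dim_count (eq_bigr (fun=> (0 == u) : nat)) => [|t _].
  by rewrite sum_nat_const card_tuple mul1n eq_sym.
by rewrite tuple0 span_nil dimv0.
Qed.

Lemma span_dim_countE n u : span_dim_count n u = qbinom q n u * alpha q m u.
Proof.
elim: n u => [|n IHn] u.
  by rewrite span_dim_count0; case: u => [|u]; rewrite ?alpha0.
rewrite span_dim_countS; case: u => [|v].
  have := IHn 0; rewrite qbinomn0 alpha0 => <-; apply: eq_bigr => t _.
  by case: eqP => [->|]; rewrite ?addn0.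
rewrite (eq_bigr (fun t : n.-tuple LL => (\dim <<tval t>> == v.+1) * q ^ v.+1 +
   (\dim <<tval t>> == v) * (q ^ m - q ^ v))) => [|t _]; last first.
  by rewrite eqSS; case: eqP => [->|_]; case: eqP => [->|_].
rewrite big_split -!big_distrl -!/(span_dim_count _ _) !IHn /= alphaSr.
ring.
Qed.

End SpanDimension.

Section HarmonicNumbers.
Variable R : realType.
Local Open Scope ring_scope.
Local Notation H := (series (@harmonic R)).

Lemma harmonic_series_ge0 k : 0 <= H k.
Proof. by rewrite seriesEord /=; apply: sumr_ge0 => i _; apply: harmonic_ge0. Qed.

Lemma harmonic_seriesB_ge a k d : (a + k <= d)%N -> (0 < d)%N ->
  k%:R / d%:R <= H (a + k)%N - H a.
Proof.
move=> + d_gt0; elim: k => [|k IHk] leakd; first by rewrite addn0 subrr mul0r.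
have le_akd : (a + k <= d)%N by apply: leq_trans leakd; rewrite leq_add2l.
have := IHk le_akd.
have inv_le_harmonic : d%:R^-1 <= harmonic (a + k)%N :> R.
  by rewrite /= lef_pV2 ?posrE ?ltr0n // ler_nat -addnS.
rewrite addnS seriesSr -[k.+1]addn1 natrD mulrDl mul1r; lra.
Qed.

Lemma ln_increment_ge (x : R) : 0 < x -> (x + 1)^-1 <= ln (x + 1) - ln x.
Proof.
move=> x_gt0; have x1_gt0 : 0 < x + 1 by lra.
have -> : ln (x + 1) - ln x = - ln (1 - (x + 1)^-1).
  rewrite -[1 - _](mulfK (lt0r_neq0 x1_gt0)) mulrBl mul1r mulVf ?lt0r_neq0 //.
  by rewrite addrK ln_div ?posrE // opprB.
rewrite lerNr; apply: le_ln1Dx.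
by rewrite ltrN2 invf_lt1 // ltrDr.
Qed.

Lemma harmonic_series_le_ln k : (0 < k)%N -> H k <= 1 + ln k%:R.
Proof.
case: k => // k _; elim: k => [|k IHk].
  by rewrite seriesEord /= big_ord1 /= invr1 ln1 addr0.
have := ln_increment_ge (ltr0Sn R k); rewrite natr1 => ln_inc.
rewrite seriesSr /=.
by apply: le_trans (lerD IHk ln_inc) _; rewrite addrCA addrK addrC.
Qed.
End HarmonicNumbers.

Section GreedyCover.
Variables (R : realType) (T : finType) (ball : T -> {set T}) (B : nat).
Hypothesis card_ball : forall c, #|ball c| = B.
Hypothesis card_balls_through : forall x, #|[set c | x \in ball c]| = B.
Hypothesis ball_center : forall c, c \in ball c.
Local Notation H := (series (@harmonic R)).
Local Open Scope ring_scope.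

Definition cover_potential (U : {set T}) : R := \sum_c H #|ball c :&: U|.

Lemma sum_card_ballI (S : {set T}) : (\sum_c #|ball c :&: S| = #|S| * B)%N.
Proof.
transitivity (\sum_c \sum_(x in S) (x \in ball c) : nat)%N.
  apply: eq_bigr => c _; rewrite -big_mkcondr /= sum1_card.
  by apply: eq_card => x; rewrite !inE andbC.
rewrite exchange_big /= -sum_nat_const; apply: eq_bigr => x _.
rewrite -(card_balls_through x) -sum1_card [RHS]big_mkcond /=.
by apply: eq_bigr => c _; rewrite inE; case: (x \in ball c).
Qed.

Lemma cover_potential_drop (U : {set T}) c0 :
    (forall c, #|ball c :&: U| <= #|ball c0 :&: U|)%N -> (0 < #|ball c0 :&: U|)%N ->
  cover_potential (U :\: ball c0) + B%:R <= cover_potential U.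
Proof.
set d := #|ball c0 :&: U| => c0_max d_gt0.
have -> : B%:R = \sum_c (#|ball c :&: (ball c0 :&: U)|%:R / d%:R) :> R.
  rewrite -mulr_suml -natr_sum sum_card_ballI natrM mulrC mulKf //.
  by rewrite pnatr_eq0 -lt0n.
rewrite -lerBrDl /cover_potential -sumrB; apply: ler_sum => c _.
have splitU : #|ball c :&: U| =
    (#|ball c :&: (U :\: ball c0)| + #|ball c :&: (ball c0 :&: U)|)%N.
  rewrite -(cardsID (ball c0) (ball c :&: U)) addnC setIDA.
  by rewrite [ball c0 :&: U]setIC setIA.
by rewrite splitU harmonic_seriesB_ge // -splitU.
Qed.

Lemma greedy_cover_of (U : {set T}) : exists C : {set T},
  (forall x, x \in U -> exists2 c, c \in C & x \in ball c) /\
  #|C|%:R * B%:R <= cover_potential U.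
Proof.
have [k] := ubnP #|U|; elim: k U => // k IHk U ltUk.
have [-> | [x0 x0U]] := set_0Vmem U.
  exists set0; split=> [x|]; first by rewrite inE.
  by rewrite cards0 mul0r sumr_ge0 // => c _; apply: harmonic_series_ge0.
have [c0 _ c0_max] := @arg_maxnP T x0 predT (fun c => #|ball c :&: U|) isT.
have d_gt0 : (0 < #|ball c0 :&: U|)%N.
  apply: leq_trans (c0_max x0 isT); rewrite card_gt0; apply/set0Pn.
  by exists x0; rewrite inE ball_center.
have ltU'k : (#|U :\: ball c0| < k)%N.
  have U_gt0 : (0 < #|U|)%N by rewrite card_gt0; apply/set0Pn; exists x0.
  by rewrite cardsD setIC; move: U_gt0 d_gt0 ltUk; lia.
have [C [coverC cardC]] := IHk _ ltU'k.
exists (c0 |: C); split=> [x xU|].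
  have [xc0 | xNc0] := boolP (x \in ball c0); first by exists c0; rewrite ?setU11.
  by have [|c cC xc] := coverC x; [rewrite inE xNc0 | exists c; rewrite ?setU1r].
apply: le_trans (cover_potential_drop (fun c => c0_max c isT) d_gt0).
rewrite cardsU1 natrD mulrDl addrC lerD //.
by case: (c0 \notin C); rewrite ?mul1r ?mul0r ?ler0n.
Qed.

Lemma greedy_cover : exists C : {set T},
  (forall x, exists2 c, c \in C & x \in ball c) /\
  #|C|%:R * B%:R <= #|T|%:R * H B.
Proof.
have [C [coverC cardC]] := greedy_cover_of [set: T].
exists C; split=> [x|]; first by apply: coverC; rewrite inE.
apply: le_trans cardC _; rewrite /cover_potential.
under eq_bigr do rewrite setIT card_ball.
by rewrite sumr_const mulr_natl.
Qed.
End GreedyCover.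

Lemma sum_eqn_ord k r : \sum_(u < r) (k == u :> nat) = (k < r).
Proof.
elim: r => [|r IHr]; first by rewrite big_ord0.
by rewrite big_ord_recr /= IHr ltnS; case: ltngtP.
Qed.

Section RankBalls.
Variables (F : finFieldType) (L : fieldExtType F).
Local Notation LL := (finvect_type L).
Local Notation q := #|F|.
Local Notation m := (\dim {:L}).

Lemma sum_rk_tuple n (P : nat -> nat) :
  \sum_(x : 'rV[LL]_n) P (rk x) = \sum_(t : n.-tuple LL) P (\dim <<tval t>>).
Proof.
rewrite (reindex (fun t : n.-tuple LL => (\row_i tnth t i)%R)) /=; last first.
  exists (fun x : 'rV[LL]_n => [tuple x ord0 i | i < n]).
    by move=> t _; apply: eq_from_tnth => i; rewrite tnth_mktuple mxE.
  by move=> x _; apply/rowP => i; rewrite mxE tnth_mktuple.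
apply: eq_bigr => t _; rewrite /rk -[in RHS](map_tnth_enum t).
by congr (P (\dim <<_>>)); apply: eq_map => i; rewrite mxE.
Qed.

Lemma card_rk_ball n rho : #|[set y : 'rV[LL]_n | rk y <= rho]| = Vol q m n rho.
Proof.
rewrite -sum1_card big_mkcond.
transitivity (\sum_(y : 'rV[LL]_n) \sum_(u < rho.+1) (rk y == u)).
  apply: eq_bigr => y _; rewrite sum_eqn_ord ltnS.
  by rewrite inE; case: (rk y <= rho).
rewrite exchange_big /Vol; apply: eq_bigr => u _.
rewrite (sum_rk_tuple _ (fun k => (k == u) : nat)) -/(span_dim_count L n u).
rewrite span_dim_countE gbinE //.
exact: finNzRing_gt1.
Qed.

Lemma rk0 n : rk (0 : 'rV[LL]_n) = 0.
Proof.
apply/eqP; rewrite dimv_eq0 -subv0; apply/span_subvP => _ /mapP[i _ ->].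
by rewrite mxE mem0v.
Qed.

Lemma card_dR_ball n rho (c : 'rV[LL]_n) :
  #|[set x | dR x c <= rho]| = Vol q m n rho.
Proof.
rewrite -card_rk_ball -[RHS](card_preimset _ (can_inj (subrK c))).
by apply: eq_card => x; rewrite !inE.
Qed.

Lemma card_dR_centers n rho (x : 'rV[LL]_n) :
  #|[set c | dR x c <= rho]| = Vol q m n rho.
Proof.
rewrite -card_rk_ball -[RHS](card_preimset _ (inv_inj (subKr x))).
by apply: eq_card => c; rewrite !inE.
Qed.

Lemma K_R_le_card n rho (C : {set 'rV[LL]_n}) :
  rank_covers rho C -> K_R L n rho <= #|C|.
Proof. by move=> covC; rewrite /K_R -minEnat -leEnat; apply: bigmin_le_cond. Qed.

End RankBalls.

Unset Implicit Arguments.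
Local Open Scope ring_scope.

Theorem proposition12 (R : realType) (F : finFieldType) (L : fieldExtType F)
    (m n rho : nat) (hm : \dim {:L} = m) (hnm : (n <= m)%N)
    (hrho0 : (0 < rho)%N) (hrhon : (rho < n)%N) :
  let q := #|F| in
  let V := Vol q m n rho in
  ((K_R L n rho)%:R : R) <=
    ((q ^ (m * n))%:R / V%:R) * (1 + ln (V%:R : R)).
Proof.
cbv zeta; subst m; set q := #|F|; set V := Vol _ _ _ _.
pose ball (c : 'rV[finvect_type L]_n) := [set x | dR x c <= rho]%N.
have ball_center c : c \in ball c by rewrite inE /dR subrr rk0.
have balls_through x : #|[set c | x \in ball c]| = V.
  by rewrite /V -(card_dR_centers rho x); apply: eq_card => c; rewrite !inE.
have [C [coverC cardC]] := greedy_cover R (card_dR_ball rho) balls_through ball_center.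
have V_gt0 : (0 < V)%N.
  by rewrite -(balls_through 0) card_gt0; apply/set0Pn; exists 0; rewrite inE ball_center.
have C_covers : rank_covers rho C.
  apply/forallP => x; have [c cC xc] := coverC x.
  by apply/existsP; exists c; rewrite cC; rewrite inE in xc.
have card_space : #|'rV[finvect_type L]_n| = (q ^ (\dim {:L} * n))%N.
  by rewrite card_mx card_finvect mul1n expnM.
apply: le_trans (_ : #|C|%:R <= _); first by rewrite ler_nat K_R_le_card.
rewrite mulrAC ler_pdivlMr ?ltr0n // -card_space; apply: le_trans cardC _.
by rewrite ler_wpM2l ?ler0n // harmonic_series_le_ln.
Qed.
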